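(* In every run of the algorithm described in the context, at every time and for every $i\in\{1,\dots,n\}$, the sequence $history_i[0..w\_sync_i[i]]$ is a prefix of the sequence $history_w[0..w\_sync_w[w]]$.
   Context: Model. There are $n$ asynchronous processes $p_1,\dots,p_n$, of which up to $t<n/2$ may crash; a process runs its algorithm correctly until it crashes. Each ordered pair of processes is linked by a reliable (no loss, corruption, duplication or creation), asynchronous, not necessarily FIFO channel. $p_w$ is the single writer, invoking writes sequentially; $v_0$ is the initial value. Messages: $\textsc{write}(b,v)$ with $b\in\{0,1\}$, which stands for the two types $\textsc{write0}(v)$ and $\textsc{write1}(v)$; $\textsc{read}()$; $\textsc{proceed}()$. Variables of $p_i$. These are: $history_i$ with $history_i[0]=v_0$; $w\_sync_i[1..n]$, initially all $0$; $r\_sync_i[1..n]$, initially all $0$. $\mathsf{write}(v)$ by $p_w$: $wsn\gets w\_sync_w[w]+1$; $w\_sync_w[w]\gets wsn$; $history_w[wsn]\gets v$. Send $\textsc{write}(wsn\bmod 2,v)$ to each $p_j$ with $w\_sync_w[j]=wsn-1$. Wait until at least $n-t$ indices $j$ have $w\_sync_w[j]=wsn$. Return. $\mathsf{read}()$ by $p_i$: $r\_sync_i[i]\gets r\_sync_i[i]+1$ and call the new value $rsn$. Send $\textsc{read}()$ to all $p_j$ with $j\ne i$. Wait until at least $n-t$ indices $j$ have $r\_sync_i[j]=rsn$. Let $sn\gets w\_sync_i[i]$. Wait until at least $n-t$ indices $j$ have $w\_sync_i[j]\ge sn$. Return $history_i[sn]$. On receipt of $\textsc{write}(b,v)$ from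 $p_j$ at $p_i$: Wait until $b=(w\_sync_i[j]+1)\bmod 2$. Let $wsn\gets w\_sync_i[j]+1$. If $wsn=w\_sync_i[i]+1$, then set $w\_sync_i[i]\gets wsn$ and $history_i[wsn]\gets v$, and send $\textsc{write}(wsn\bmod 2,v)$ to each $p_\ell$ with $w\_sync_i[\ell]=wsn-1$. Else, if $wsn<w\_sync_i[i]$, send $\textsc{write}((wsn+1)\bmod 2,history_i[wsn+1])$ to $p_j$. Finally set $w\_sync_i[j]\gets wsn$. On receipt of $\textsc{read}()$ from $p_j$ at $p_i$: Let $sn\gets w\_sync_i[i]$; wait until $w\_sync_i[j]\ge sn$; send $\textsc{proceed}()$ to $p_j$. On receipt of $\textsc{proceed}()$ from $p_j$ at $p_i$: $r\_sync_i[j]\gets r\_sync_i[j]+1$. Message handlers run concurrently; a waiting handler does not block the reception of other messages. *)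

(* Operational (interleaving) model of the one-writer
   register algorithm of the context: crash-prone processes, reliable
   asynchronous non-FIFO channels (multiset of in-transit messages),
   concurrently waiting message handlers (executed atomically once their
   wait condition holds). *)
From mathcomp Require Import all_boot.
Set Implicit Arguments. Unset Strict Implicit. Unset Printing Implicit Defensive.

Section Model.
Variables (n : nat) (V : Type).

(* WRITE(b,v): b = false stands for WRITE0, b = true for WRITE1;
   "x mod 2" is encoded as [odd x]. *)
Inductive msg := MWrite of bool & V | MRead | MProceed.

(* a received message whose handler is waiting *)
Inductive pending :=
| PWrite of 'I_n & bool & V      (* WRITE(b,v) received from p_j *)
| PRead of 'I_n & nat.           (* READ() received from p_j, with sn fixed at receipt *)

Inductive status :=
| Idle
| Writing of nat        (* waiting in write, for wsn *)
| Reading1 of nat       (* waiting in read, first wait, for rsn *)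
| Reading2 of nat.      (* waiting in read, second wait, for sn *)

Record lstate := LState {
  hist : nat -> V;              (* history_i (entries never written are arbitrary) *)
  wsync : 'I_n -> nat;
  rsync : 'I_n -> nat;
  pend : seq pending;
  stat : status;
  crashed : bool }.

(* (sender, receiver, message) *)
Definition packet := ('I_n * 'I_n * msg)%type.

Record config := Config { loc : 'I_n -> lstate; net : seq packet }.

Definition upd (T : Type) (f : 'I_n -> T) (j : 'I_n) (x : T) : 'I_n -> T :=
  fun k => if k == j then x else f k.
Definition updh (h : nat -> V) (k : nat) (x : V) : nat -> V :=
  fun m => if m == k then x else h m.

Definition set_stat (s : lstate) (st : status) : lstate :=
  LState (hist s) (wsync s) (rsync s) (pend s) st (crashed s).
Definition set_pend (s : lstate) (p : seq pending) : lstate :=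
  LState (hist s) (wsync s) (rsync s) p (stat s) (crashed s).

(* invocation of write(v) by p_i (= p_w) *)
Definition inv_write (i : 'I_n) (s : lstate) (v : V) : lstate * seq packet :=
  let wsn := (wsync s i).+1 in
  let ws := upd (wsync s) i wsn in
  (LState (updh (hist s) wsn v) ws (rsync s) (pend s) (Writing wsn) (crashed s),
   [seq (i, l, MWrite (odd wsn) v) | l <- enum 'I_n & ws l == wsn - 1]).

(* invocation of read() by p_i *)
Definition inv_read (i : 'I_n) (s : lstate) : lstate * seq packet :=
  let rsn := (rsync s i).+1 in
  (LState (hist s) (wsync s) (upd (rsync s) i rsn) (pend s) (Reading1 rsn) (crashed s),
   [seq (i, l, MRead) | l <- enum 'I_n & l != i]).

Definition guard (s : lstate) (h : pending) : bool :=
  match h with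
  | PWrite j b _ => b == odd (wsync s j).+1
  | PRead j sn => sn <= wsync s j
  end.

(* body (after the wait) of a handler at p_i; [s] already has the handler
   removed from its pending list *)
Definition run (i : 'I_n) (s : lstate) (h : pending) : lstate * seq packet :=
  match h with
  | PWrite j _ v =>
      let wsn := (wsync s j).+1 in
      if wsn == (wsync s i).+1 then
        let ws := upd (wsync s) i wsn in
        (LState (updh (hist s) wsn v) (upd ws j wsn) (rsync s) (pend s) (stat s) (crashed s),
         [seq (i, l, MWrite (odd wsn) v) | l <- enum 'I_n & ws l == wsn - 1])
      else if wsn < wsync s i then
        (LState (hist s) (upd (wsync s) j wsn) (rsync s) (pend s) (stat s) (crashed s),
         [:: (i, j, MWrite (odd wsn.+1) (hist s wsn.+1))])
      else
        (LState (hist s) (upd (wsync s) j wsn) (rsync s) (pend s) (stat s) (crashed s),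
         [::])
  | PRead j _ => (s, [:: (i, j, MProceed)])
  end.

Definition receive (i : 'I_n) (s : lstate) (j : 'I_n) (m : msg) : lstate :=
  match m with
  | MWrite b v => set_pend s (rcons (pend s) (PWrite j b v))
  | MRead => set_pend s (rcons (pend s) (PRead j (wsync s i)))
  | MProceed =>
      LState (hist s) (wsync s) (upd (rsync s) j (rsync s j).+1) (pend s) (stat s) (crashed s)
  end.

Definition crash (s : lstate) : lstate :=
  LState (hist s) (wsync s) (rsync s) (pend s) (stat s) true.

(* local (non-delivery) atomic steps of process p_i *)
Inductive lstep (w : 'I_n) (t : nat) (i : 'I_n) : lstate -> lstate -> seq packet -> Prop :=
| ls_write_inv s v : i = w -> stat s = Idle ->
    lstep w t i s (inv_write i s v).1 (inv_write i s v).2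
| ls_write_ret s wsn : stat s = Writing wsn ->
    n - t <= #|[pred j | wsync s j == wsn]| ->
    lstep w t i s (set_stat s Idle) [::]
| ls_read_inv s : stat s = Idle ->
    lstep w t i s (inv_read i s).1 (inv_read i s).2
| ls_read_mid s rsn : stat s = Reading1 rsn ->
    n - t <= #|[pred j | rsync s j == rsn]| ->
    lstep w t i s (set_stat s (Reading2 (wsync s i))) [::]
| ls_read_ret s sn : stat s = Reading2 sn ->
    n - t <= #|[pred j | sn <= wsync s j]| ->
    lstep w t i s (set_stat s Idle) [::]
| ls_handler s p1 h p2 : pend s = p1 ++ h :: p2 -> guard s h ->
    lstep w t i s (run i (set_pend s (p1 ++ p2)) h).1 (run i (set_pend s (p1 ++ p2)) h).2.

Inductive step (w : 'I_n) (t : nat) : config -> config -> Prop :=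
| st_local c i s' out : ~~ crashed (loc c i) -> lstep w t i (loc c i) s' out ->
    step w t c (Config (upd (loc c) i s') (net c ++ out))
| st_deliver c s1 s2 j i m : net c = s1 ++ (j, i, m) :: s2 -> ~~ crashed (loc c i) ->
    step w t c (Config (upd (loc c) i (receive i (loc c i) j m)) (s1 ++ s2))
| st_crash c i : ~~ crashed (loc c i) -> #|[pred k | crashed (loc c k)]| < t ->
    step w t c (Config (upd (loc c) i (crash (loc c i))) (net c)).

(* initial configurations: history_i[0] = v0, all counters 0, no message in
   transit; unwritten history entries are arbitrary *)
Definition initial (v0 : V) (c : config) : Prop :=
  net c = [::] /\
  forall i, hist (loc c i) 0 = v0 /\ (forall j, wsync (loc c i) j = 0) /\
             (forall j, rsync (loc c i) j = 0) /\ pend (loc c i) = [::] /\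
             stat (loc c i) = Idle /\ crashed (loc c i) = false.

Inductive reachable (v0 : V) (w : 'I_n) (t : nat) : config -> Prop :=
| reach_init c : initial v0 c -> reachable v0 w t c
| reach_step c c' : reachable v0 w t c -> step w t c c' -> reachable v0 w t c'.

Definition hist_seq (i : 'I_n) (s : lstate) : seq V := mkseq (hist s) (wsync s i).+1.

End Model.

Definition is_prefix (T : Type) (s1 s2 : seq T) : Prop := exists s3, s2 = s1 ++ s3.

From mathcomp Require Import all_boot zify.
From Stdlib Require Import FunctionalExtensionality.
From Stdlib Require Lists.List.
Set Implicit Arguments. Unset Strict Implicit. Unset Printing Implicit Defensive.

(* Everything follows from an invariant of reachable configurations.  Write
   ws_i for w_sync_i and s(j,i) := min(ws_j[j], ws_j[i] + 1).  Then
   ws_i[i] <= ws_w[w], history_i agrees with history_w up to ws_i[i],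
   ws_i[j] <= ws_i[i] and ws_i[j] <= s(j,i); every WRITE from p_j to p_i,
   in transit or waiting at p_i, carries history_w[k] for an index k of its
   parity with ws_i[j] < k <= s(j,i); and for each parity the number of such
   messages is the number of indices of that parity in (ws_i[j], s(j,i)].
   As s(j,i) <= ws_i[j] + 2, the one WRITE that p_i can accept from p_j, the
   one with the parity of ws_i[j] + 1, carries history_w[ws_i[j] + 1]: the
   alternating bit makes the non-FIFO channel behave like a FIFO one. *)

Lemma In_cat (T : Type) (x : T) (s1 s2 : seq T) :
  List.In x (s1 ++ s2) <-> List.In x s1 \/ List.In x s2.
Proof. by elim: s1 => [|y s IH] /=; [tauto | rewrite IH; tauto]. Qed.

Lemma In_filter (T : Type) (a : pred T) (x : T) (s : seq T) :
  List.In x (filter a s) <-> List.In x s /\ a x.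
Proof.
elim: s => [|y s IH] /=; first tauto.
case: ifP => ay /=; rewrite IH; first by intuition congruence.
by split=> [|[[<-|]]]; [tauto | rewrite ay | tauto].
Qed.

Lemma In_count (T : Type) (a : pred T) (x : T) (s : seq T) :
  List.In x s -> a x -> 0 < count a s.
Proof.
elim: s => [|y s IH] //= [<-|hx] ax; first by rewrite ax.
exact: leq_trans (IH hx ax) (leq_addl _ _).
Qed.

Lemma In_map_filter (T U : Type) (f : T -> U) (P : pred T) (y : U) (s : seq T) :
  List.In y [seq f x | x <- s & P x] -> exists2 x, y = f x & P x.
Proof.
elim: s => [|x s IH] //=; case Px: (P x) => /=; last exact: IH.
by case=> [<-|/IH //]; exists x.
Qed.

Lemma count_enum_pred1 (n : nat) (y : 'I_n) (c : bool) :
  count (fun l => (l == y) && c) (enum 'I_n) = c.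
Proof.
case: c; last by rewrite (eq_count (a2 := pred0)) ?count_pred0 // => l; rewrite andbF.
rewrite (eq_count (a2 := pred1 y)); last by move=> l; rewrite andbT.
by rewrite count_uniq_mem ?enum_uniq ?mem_enum.
Qed.

Lemma eqVneq2 (T : eqType) (a b c d : T) : (a = b /\ c = d) \/ ((a != b) || (c != d)).
Proof. by case: (eqVneq a b) => [->|]; case: (eqVneq c d) => [->|]; auto. Qed.

Lemma upd_id (n : nat) (T : Type) (f : 'I_n -> T) (j : 'I_n) : upd f j (f j) = f.
Proof. by apply: functional_extensionality => k; rewrite /upd; case: eqP => [->|]. Qed.

Lemma comp_upd (n : nat) (T U : Type) (f : T -> U) (g : 'I_n -> T) (j : 'I_n) (x : T) :
  (fun k => f (upd g j x k)) = upd (fun k => f (g k)) j (f x).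
Proof. by apply: functional_extensionality => k; rewrite /upd; case: eqP. Qed.

Definition count_parity (b : bool) (R S : nat) : nat :=
  count (fun k => odd k == b) (iota R.+1 (S - R)).

Lemma count_parity_id b R : count_parity b R R = 0.
Proof. by rewrite /count_parity subnn. Qed.

Lemma count_paritySr b R S :
  R <= S -> count_parity b R S.+1 = count_parity b R S + (odd S.+1 == b).
Proof.
move=> le_RS; rewrite /count_parity subSn // -[(S - R).+1]addn1 iotaD count_cat /= addn0.
by rewrite subnKC.
Qed.

Lemma count_parity_first b R S :
  R < S -> count_parity b R S = (odd R.+1 == b) + count_parity b R.+1 S.
Proof. by move=> lt_RS; rewrite /count_parity -(subnSK lt_RS). Qed.

Lemma count_parity_next R S : R < S <= R.+2 -> count_parity (odd R.+1) R S = 1.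
Proof.
move=> /andP [lt_RS le_S]; rewrite count_parity_first // eqxx.
have [->|->] : S = R.+1 \/ S = R.+2 by lia.
  by rewrite count_parity_id.
by rewrite /count_parity subSn // subnn /= negbK; case: (odd R).
Qed.

Section Invariant.
Variables (n : nat) (V : Type) (w : 'I_n).
Implicit Types (ws : 'I_n -> 'I_n -> nat) (H : 'I_n -> nat -> V)
  (nt : seq (packet n V)) (pd : 'I_n -> seq (pending n V)).

(* p_j forwards index k to p_i only once it holds k and has recorded
   w_sync_j[i] >= k - 1, so this is the last index p_j can have sent to p_i. *)
Definition sent ws (j i : 'I_n) : nat := minn (ws j j) (ws j i).+1.

Definition valid_write ws H (j i : 'I_n) (b : bool) (v : V) : Prop :=
  exists2 k, ws i j < k <= sent ws j i & odd k = b /\ v = H w k.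

Definition valid_packet ws H (p : packet n V) : Prop :=
  if p is (j, i, MWrite b v) then valid_write ws H j i b v else True.

Definition valid_pending ws H (i : 'I_n) (h : pending n V) : Prop :=
  if h is PWrite j b v then valid_write ws H j i b v else True.

Definition is_write (p : packet n V) : bool := if p is (_, _, MWrite _ _) then true else false.
Definition is_pwrite (h : pending n V) : bool := if h is PWrite _ _ _ then true else false.

Definition write_packet (j i : 'I_n) (b : bool) (p : packet n V) : bool :=
  if p is (j', i', MWrite b' _) then [&& j' == j, i' == i & b' == b] else false.

Definition write_pending (j : 'I_n) (b : bool) (h : pending n V) : bool :=
  if h is PWrite j' b' _ then (j' == j) && (b' == b) else false.

Definition in_flight nt pd (j i : 'I_n) (b : bool) : nat :=
  count (write_packet j i b) nt + count (write_pending j b) (pd i).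

Record inv ws H nt pd : Prop := {
  own_le_writer : forall i, ws i i <= ws w w;
  hist_agree : forall i k, k <= ws i i -> H i k = H w k;
  sync_le_own : forall i j, ws i j <= ws i i;
  sync_le_sent : forall i j, ws i j <= sent ws j i;
  packets_valid : forall p, List.In p nt -> valid_packet ws H p;
  pendings_valid : forall i h, List.In h (pd i) -> valid_pending ws H i h;
  in_flight_parity : forall j i b,
    in_flight nt pd j i b = count_parity b (ws i j) (sent ws j i) }.

Lemma sent_mono ws ws' (j i : 'I_n) : (forall a c, ws a c <= ws' a c) ->
  sent ws j i <= sent ws' j i.
Proof. by move=> le_ws; rewrite /sent; have := le_ws j j; have := le_ws j i; lia. Qed.

Lemma sent_self ws j : sent ws j j = ws j j.
Proof. exact: minn_idPl (leqnSn _). Qed.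

Section Bounds.
Variables (ws : 'I_n -> 'I_n -> nat) (H : 'I_n -> nat -> V).
Variables (nt : seq (packet n V)) (pd : 'I_n -> seq (pending n V)).
Hypothesis I : inv ws H nt pd.

Lemma sent_le_writer j i : sent ws j i <= ws w w.
Proof. by have := own_le_writer I j; rewrite /sent; lia. Qed.

Lemma sent_le_sync2 j i : sent ws j i <= (ws i j).+2.
Proof. by have := sync_le_sent I j i; rewrite /sent; lia. Qed.

Lemma valid_write_next j i v : valid_write ws H j i (odd (ws i j).+1) v ->
  (ws i j).+1 <= sent ws j i /\ v = H w (ws i j).+1.
Proof.
move=> [k /andP [lt_k le_k] [odd_k ->]].
have [e|e] : k = (ws i j).+1 \/ k = (ws i j).+2 by have := sent_le_sync2 j i; lia.
  by subst k.
by move: odd_k; rewrite e /=; case: (odd _).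
Qed.

End Bounds.

Lemma valid_write_mono ws ws' H H' j i b v : valid_write ws H j i b v ->
  (forall a c, ws a c <= ws' a c) ->
  (forall k, ws i j < k <= sent ws j i -> odd k = b -> ws' i j < k) ->
  (forall k, k <= sent ws j i -> H' w k = H w k) -> valid_write ws' H' j i b v.
Proof.
move=> [k range_k [odd_k ->]] le_ws above hist_eq; exists k.
  by have := sent_mono j i le_ws; have := above k range_k odd_k; lia.
by split=> //; rewrite hist_eq //; case/andP: range_k.
Qed.

Lemma inv_frame ws H nt pd nt' pd' : inv ws H nt pd ->
  (forall p, List.In p nt' -> valid_packet ws H p) ->
  (forall i h, List.In h (pd' i) -> valid_pending ws H i h) ->
  (forall j i b, in_flight nt' pd' j i b = in_flight nt pd j i b) ->
  inv ws H nt' pd'.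
Proof.
move=> I valid_nt valid_pd same_count.
split=> //; [exact: own_le_writer I | exact: hist_agree I | exact: sync_le_own I |
              exact: sync_le_sent I | ].
by move=> j i b; rewrite same_count; apply: (in_flight_parity I).
Qed.

Definition advance_sync ws (i : 'I_n) : 'I_n -> 'I_n -> nat :=
  upd ws i (upd (ws i) i (ws i i).+1).

Definition advance_hist ws H (i : 'I_n) (v : V) : 'I_n -> nat -> V :=
  upd H i (updh (H i) (ws i i).+1 v).

Definition forward ws (i : 'I_n) (v : V) : seq (packet n V) :=
  [seq (i, l, MWrite (odd (ws i i).+1) v) |
     l <- enum 'I_n & upd (ws i) i (ws i i).+1 l == (ws i i).+1 - 1].

Lemma advance_sync_own ws i : advance_sync ws i i i = (ws i i).+1.
Proof. by rewrite /advance_sync /upd /= !eqxx. Qed.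

Lemma advance_sync_other ws i a c :
  (a != i) || (c != i) -> advance_sync ws i a c = ws a c.
Proof.
rewrite /advance_sync /upd /=; case: (eqVneq a i) => [->|//] /=.
by case: eqVneq.
Qed.

Lemma advance_sync_le ws i a c : ws a c <= advance_sync ws i a c.
Proof.
have [[-> ->]|neq] := eqVneq2 a i c i; first by rewrite advance_sync_own.
by rewrite advance_sync_other.
Qed.

Lemma advance_sent_other ws i x y :
  x != i -> sent (advance_sync ws i) x y = sent ws x y.
Proof. by move=> neq; rewrite /sent !advance_sync_other ?neq. Qed.

Lemma advance_hist_old ws H i v k :
  k <= ws w w -> advance_hist ws H i v w k = H w k.
Proof.
rewrite /advance_hist /upd /updh /=; case: eqVneq => [-> le_k|] //.
by case: eqVneq => // ek; move: le_k; rewrite ek ltnn.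
Qed.

Lemma count_forward ws i v x y b :
  count (write_packet x y b) (forward ws i v) =
  [&& x == i, upd (ws i) i (ws i i).+1 y == (ws i i).+1 - 1 & odd (ws i i).+1 == b].
Proof.
rewrite count_map count_filter -(count_enum_pred1 y).
apply: eq_count => l /=; case: (eqVneq l y) => [->|neq] /=; last by rewrite !andbF.
by rewrite andbAC -andbA eq_sym.
Qed.

Section Advance.
Variables (ws : 'I_n -> 'I_n -> nat) (H : 'I_n -> nat -> V).
Variables (nt : seq (packet n V)) (pd : 'I_n -> seq (pending n V)) (i : 'I_n) (v : V).
Hypothesis I : inv ws H nt pd.
Hypothesis new_entry : i = w \/ (ws i i).+1 <= ws w w /\ v = H w (ws i i).+1.

Lemma advance_hist_new : advance_hist ws H i v w (ws i i).+1 = v.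
Proof.
rewrite /advance_hist /upd /updh /=; case: new_entry => [->|[le_R ->]].
  by rewrite !eqxx.
by case: eqVneq => [ew|//]; move: le_R; rewrite ew ltnn.
Qed.

Lemma advance_own_le_writer a : advance_sync ws i a a <= advance_sync ws i w w.
Proof.
case: (eqVneq a i) => [->|na]; last first.
  rewrite advance_sync_other ?na //.
  exact: leq_trans (own_le_writer I a) (advance_sync_le _ _ _ _).
rewrite advance_sync_own; case: new_entry => [<-|[le_R _]].
  by rewrite advance_sync_own.
exact: leq_trans le_R (advance_sync_le _ _ _ _).
Qed.

Lemma advance_hist_agree a k : k <= advance_sync ws i a a ->
  advance_hist ws H i v a k = advance_hist ws H i v w k.
Proof.
have hist_old k' : k' <= ws a a -> advance_hist ws H i v w k' = H a k'.
  move=> le_k; rewrite advance_hist_old ?(hist_agree I) //.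
  exact: leq_trans (own_le_writer I a).
case: (eqVneq a i) => [ea|na]; last first.
  rewrite advance_sync_other ?na // => le_k.
  by rewrite hist_old // /advance_hist /upd /= (negbTE na).
subst a; rewrite advance_sync_own => le_k; case: (eqVneq k (ws i i).+1) => [->|nk].
  by rewrite advance_hist_new /advance_hist /upd /updh /= !eqxx.
by rewrite hist_old /advance_hist /upd /updh /= ?eqxx ?(negbTE nk) //; lia.
Qed.

Lemma advance_sync_le_own a c : advance_sync ws i a c <= advance_sync ws i a a.
Proof.
case: (eqVneq a i) => [->|na]; last by rewrite !advance_sync_other ?na //; apply: (sync_le_own I).
case: (eqVneq c i) => [->//|nc].
by rewrite advance_sync_own advance_sync_other ?nc ?orbT // leqW ?(sync_le_own I).
Qed.

Lemma advance_sync_le_sent a c : advance_sync ws i a c <= sent (advance_sync ws i) c a.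
Proof.
have [[-> ->]|neq] := eqVneq2 a i c i; first by rewrite sent_self.
rewrite advance_sync_other //.
exact: leq_trans (sync_le_sent I a c) (sent_mono c a (advance_sync_le ws i)).
Qed.

Lemma advance_valid x y b u : valid_write ws H x y b u ->
  valid_write (advance_sync ws i) (advance_hist ws H i v) x y b u.
Proof.
move=> valid; apply: valid_write_mono valid (advance_sync_le ws i) _ _.
  move=> k /andP [lt_k le_k] _; have [[ey ex]|neq] := eqVneq2 y i x i.
    by subst; move: le_k lt_k; rewrite sent_self; lia.
  by rewrite advance_sync_other.
by move=> k le_k; apply: advance_hist_old; apply: leq_trans le_k (sent_le_writer I x y).
Qed.

Lemma advance_forward_valid p : List.In p (forward ws i v) ->
  valid_packet (advance_sync ws i) (advance_hist ws H i v) p.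
Proof.
move=> in_fwd; have [l -> /eqP] := In_map_filter in_fwd; rewrite /upd /=.
case: eqVneq => [_|nl]; first lia.
rewrite subn1 /= => ws_il; exists (ws i i).+1; last by rewrite advance_hist_new.
rewrite advance_sync_other ?nl // /sent advance_sync_own advance_sync_other ?nl ?orbT //.
by have := sync_le_sent I l i; rewrite /sent ws_il; lia.
Qed.

Lemma advance_in_flight x y b :
  in_flight (nt ++ forward ws i v) pd x y b =
  count_parity b (advance_sync ws i y x) (sent (advance_sync ws i) x y).
Proof.
rewrite /in_flight count_cat count_forward addnAC.
have := in_flight_parity I x y b; rewrite /in_flight => ->.
case: (eqVneq x i) => [->|nx] /=; last first.
  by rewrite advance_sync_other ?nx ?orbT // advance_sent_other // addn0.
case: (eqVneq y i) => [->|ny].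
  by rewrite !sent_self advance_sync_own !count_parity_id /upd /= eqxx subn1 /= gtn_eqF.
rewrite advance_sync_other ?ny // /sent advance_sync_own advance_sync_other ?ny ?orbT //.
rewrite /upd /= (negbTE ny) subn1 /=.
have own := sync_le_own I i y; have bound := sync_le_sent I y i; rewrite /sent in bound.
case: eqVneq => [e|ne] /=; last by rewrite addn0; congr count_parity; lia.
rewrite e (minn_idPl (leqnSn _)) minnn count_paritySr //; lia.
Qed.

Lemma inv_advance : inv (advance_sync ws i) (advance_hist ws H i v) (nt ++ forward ws i v) pd.
Proof.
split.
- exact: advance_own_le_writer.
- exact: advance_hist_agree.
- exact: advance_sync_le_own.
- exact: advance_sync_le_sent.
- move=> p /In_cat [/(packets_valid I)|/advance_forward_valid //].
  by case: p => [[x y] []] //= b u; apply: advance_valid.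
- by move=> a h /(pendings_valid I); case: h => //= x b u; apply: advance_valid.
- exact: advance_in_flight.
Qed.

End Advance.

Definition consume_sync ws (i j : 'I_n) : 'I_n -> 'I_n -> nat :=
  upd ws i (upd (ws i) j (ws i j).+1).

Definition resend ws H (i j : 'I_n) : seq (packet n V) :=
  if (ws i j).+1 < ws i i then [:: (i, j, MWrite (odd (ws i j).+2) (H i (ws i j).+2))]
  else [::].

Lemma consume_sync_at ws i j : consume_sync ws i j i j = (ws i j).+1.
Proof. by rewrite /consume_sync /upd /= !eqxx. Qed.

Lemma consume_sync_other ws i j a c :
  (a != i) || (c != j) -> consume_sync ws i j a c = ws a c.
Proof.
rewrite /consume_sync /upd /=; case: (eqVneq a i) => [->|//] /=.
by case: eqVneq.
Qed.

Lemma consume_sync_le ws i j a c : ws a c <= consume_sync ws i j a c.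
Proof.
have [[-> ->]|neq] := eqVneq2 a i c j; first by rewrite consume_sync_at.
by rewrite consume_sync_other.
Qed.

Lemma count_resend ws H i j x y b :
  count (write_packet x y b) (resend ws H i j) =
  ((ws i j).+1 < ws i i) && [&& i == x, j == y & odd (ws i j).+2 == b].
Proof. by rewrite /resend; case: ifP => //= _; rewrite addn0. Qed.

Section Consume.
Variables (ws : 'I_n -> 'I_n -> nat) (H : 'I_n -> nat -> V).
Variables (nt : seq (packet n V)) (pd : 'I_n -> seq (pending n V)).
Variables (i j : 'I_n) (b : bool) (v : V) (p1 p2 : seq (pending n V)).
Hypothesis I : inv ws H nt pd.
Hypothesis pend_i : pd i = p1 ++ PWrite j b v :: p2.
Hypothesis parity : b = odd (ws i j).+1.

Lemma consume_message : [/\ j != i, (ws i j).+1 <= sent ws j i & v = H w (ws i j).+1].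
Proof.
have valid : valid_write ws H j i b v.
  by apply: (pendings_valid I (h := PWrite j b v)); rewrite pend_i; apply/In_cat; right; left.
rewrite parity in valid; have [le_R ->] := valid_write_next I valid; split=> //.
by apply/eqP => eji; move: le_R; rewrite eji sent_self ltnn.
Qed.

Lemma consume_unique :
  count (write_packet j i b) nt = 0 /\ count (write_pending j b) (p1 ++ p2) = 0.
Proof.
have [_ lt_R _] := consume_message.
have one : count_parity b (ws i j) (sent ws j i) = 1.
  by rewrite parity count_parity_next // lt_R (sent_le_sync2 I).
have := in_flight_parity I j i b; rewrite one /in_flight pend_i !count_cat /= !eqxx /=.
lia.
Qed.

Lemma consume_other_parity bb u :
  (List.In (j, i, MWrite bb u) nt \/ List.In (PWrite j bb u) (p1 ++ p2)) -> bb != b.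
Proof.
have [none_nt none_pd] := consume_unique.
case=> [in_nt|in_pd]; apply/eqP => ebb; subst bb.
  by have := In_count (a := write_packet j i b) in_nt; rewrite none_nt /= !eqxx => /(_ isT).
by have := In_count (a := write_pending j b) in_pd; rewrite none_pd /= !eqxx => /(_ isT).
Qed.

Lemma consume_valid x y bb u : valid_write ws H x y bb u ->
  ((x == j) && (y == i) ==> (bb != b)) -> valid_write (consume_sync ws i j) H x y bb u.
Proof.
move=> valid other; apply: valid_write_mono valid (consume_sync_le ws i j) _ (fun _ _ => erefl).
move=> k /andP [lt_k _] odd_k; have [[ey ex]|neq] := eqVneq2 y i x j; last first.
  by rewrite consume_sync_other.
subst x y; rewrite consume_sync_at; move: other; rewrite !eqxx /= -odd_k parity.
by case: (eqVneq k (ws i j).+1) => [->|nk]; [rewrite eqxx | lia].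
Qed.

Lemma consume_sync_diag a : consume_sync ws i j a a = ws a a.
Proof.
have [ji _ _] := consume_message.
by apply: consume_sync_other; case: (eqVneq a i) => [->|//]; rewrite eq_sym ji orbT.
Qed.

Lemma consume_sent x y :
  (x != i) || (y != j) -> sent (consume_sync ws i j) x y = sent ws x y.
Proof. by move=> neq; rewrite /sent consume_sync_diag consume_sync_other. Qed.

Hypothesis lagging : ws i j < ws i i.

Lemma consume_sync_le_own a c : consume_sync ws i j a c <= consume_sync ws i j a a.
Proof.
rewrite consume_sync_diag; have [[-> ->]|neq] := eqVneq2 a i c j.
  by rewrite consume_sync_at.
by rewrite consume_sync_other // (sync_le_own I).
Qed.

Lemma consume_sync_le_sent a c : consume_sync ws i j a c <= sent (consume_sync ws i j) c a.
Proof.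
apply: leq_trans (sent_mono c a (consume_sync_le ws i j)).
have [[-> ->]|neq] := eqVneq2 a i c j; last by rewrite consume_sync_other // (sync_le_sent I).
by rewrite consume_sync_at; have [] := consume_message.
Qed.

Lemma consume_resend_valid p : List.In p (resend ws H i j) ->
  valid_packet (consume_sync ws i j) H p.
Proof.
rewrite /resend; case: ifP => // lt_R [] // <- /=; have [ji _ _] := consume_message.
exists (ws i j).+2; last by split=> //; rewrite (hist_agree I).
rewrite consume_sync_other ?ji // /sent consume_sync_diag consume_sync_at.
by have := sync_le_sent I j i; rewrite /sent; lia.
Qed.

Lemma consume_in_flight x y bb :
  in_flight (nt ++ resend ws H i j) (upd pd i (p1 ++ p2)) x y bb =
  count_parity bb (consume_sync ws i j y x) (sent (consume_sync ws i j) x y).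
Proof.
have [ji lt_R _] := consume_message.
rewrite /in_flight count_cat count_resend.
have := in_flight_parity I x y bb; rewrite /in_flight /upd /=.
have [[ex ey]|nxy] := eqVneq2 x j y i.
  subst x y; rewrite consume_sync_at consume_sent ?ji // (negbTE ji) andbF eqxx.
  rewrite pend_i !count_cat /= eqxx (count_parity_first _ lt_R) -parity; lia.
have [[ex ey]|nyx] := eqVneq2 x i y j.
  subst x y; rewrite consume_sync_other ?ji // (negbTE ji) !eqxx /= /sent.
  rewrite consume_sync_diag consume_sync_at.
  have := sync_le_sent I j i; rewrite /sent.
  case: (ltnP (ws i j).+1 (ws i i)) => [lt_own|ge_own] /=.
    rewrite (minn_idPr lt_own) => bound old.
    by rewrite count_paritySr // -old addnAC.
  by move=> _ old; rewrite addn0 old (minn_idPl (leqW ge_own)).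
rewrite consume_sent // consume_sync_other; last by rewrite orbC.
have -> : [&& i == x, j == y & odd (ws i j).+2 == bb] = false.
  by case/orP: nyx => /negbTE ne; rewrite [i == x]eq_sym [j == y]eq_sym ne /= ?andbF.
rewrite andbF addn0; case: (eqVneq y i) nxy => [->|_ _ -> //]; rewrite orbF => nx.
by rewrite pend_i !count_cat /= eq_sym (negbTE nx) /=; lia.
Qed.

Lemma inv_consume :
  inv (consume_sync ws i j) H (nt ++ resend ws H i j) (upd pd i (p1 ++ p2)).
Proof.
have in_pend h : List.In h (p1 ++ p2) -> List.In h (pd i).
  by rewrite pend_i => /In_cat [?|?]; apply/In_cat; [left | right; right].
split.
- by move=> a; rewrite !consume_sync_diag (own_le_writer I).
- by move=> a k; rewrite consume_sync_diag; apply: (hist_agree I).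
- exact: consume_sync_le_own.
- exact: consume_sync_le_sent.
- move=> p /In_cat [in_nt|/consume_resend_valid //].
  move: (packets_valid I in_nt); case: p in_nt => [[x y] []] //= bb u in_nt valid.
  apply: consume_valid valid _; apply/implyP => /andP [/eqP ex /eqP ey]; subst x y.
  exact: consume_other_parity (or_introl in_nt).
- move=> a h; rewrite /upd /=; case: eqVneq => [->|na] in_h.
    move: (pendings_valid I (in_pend _ in_h)); case: h in_h => //= x bb u in_h valid.
    apply: consume_valid valid _; apply/implyP => /andP [/eqP ex _]; subst x.
    exact: consume_other_parity (or_intror in_h).
  move: (pendings_valid I in_h); case: h in_h => //= x bb u _ valid.
  by apply: consume_valid valid _; rewrite (negbTE na) andbF.
- exact: consume_in_flight.
Qed.

End Consume.

Lemma count_write_packet_filter x y b nt :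
  count (write_packet x y b) (filter is_write nt) = count (write_packet x y b) nt.
Proof. by rewrite count_filter; apply: eq_count => -[[? ?] []] //= *; rewrite andbT. Qed.

Lemma count_write_pending_filter x b (s : seq (pending n V)) :
  count (write_pending x b) (filter is_pwrite s) = count (write_pending x b) s.
Proof. by rewrite count_filter; apply: eq_count => -[] //= *; rewrite andbT. Qed.

Lemma filter_cat_nowrite nt out :
  ~~ has is_write out -> filter is_write (nt ++ out) = filter is_write nt.
Proof.
move=> none; rewrite filter_cat; suff -> : filter is_write out = [::] by rewrite cats0.
by elim: out none => //= p out IH; case: (is_write p) => //= /IH.
Qed.

Definition syncs (c : config n V) : 'I_n -> 'I_n -> nat := fun a => wsync (loc c a).
Definition hists (c : config n V) : 'I_n -> nat -> V := fun a => hist (loc c a).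
Definition pends (c : config n V) : 'I_n -> seq (pending n V) := fun a => pend (loc c a).

Definition inv_at (c : config n V) : Prop := inv (syncs c) (hists c) (net c) (pends c).

Lemma inv_at_upd c i s' nt' :
  inv (upd (syncs c) i (wsync s')) (upd (hists c) i (hist s')) nt' (upd (pends c) i (pend s')) ->
  inv_at (Config (upd (loc c) i s') nt').
Proof. by rewrite /inv_at /syncs /hists /pends /= !comp_upd. Qed.

Lemma inv_at_quiet c i s' nt' : inv_at c ->
  wsync s' = wsync (loc c i) -> hist s' = hist (loc c i) ->
  filter is_write nt' = filter is_write (net c) ->
  filter is_pwrite (pend s') = filter is_pwrite (pend (loc c i)) ->
  inv_at (Config (upd (loc c) i s') nt').
Proof.
move=> I same_sync same_hist same_net same_pend.
apply: inv_at_upd; rewrite same_sync same_hist !upd_id; apply: (inv_frame I).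
- move=> p in_p; case wp: (is_write p); last by case: p in_p wp => [[x y] []].
  have : List.In p (filter is_write nt') by apply/In_filter.
  by rewrite same_net => /In_filter [/(packets_valid I)].
- move=> a h; rewrite /upd /=; case: eqVneq => [->|_]; last exact: (pendings_valid I).
  move=> in_h; case wh: (is_pwrite h); last by case: h in_h wh.
  have : List.In h (filter is_pwrite (pend s')) by apply/In_filter.
  by rewrite same_pend => /In_filter [/(pendings_valid I)].
- move=> x y b; rewrite /in_flight -count_write_packet_filter same_net count_write_packet_filter.
  rewrite /upd /=; case: eqVneq => [->|//].
  by rewrite -count_write_pending_filter same_pend count_write_pending_filter.
Qed.

Lemma consume_advance_sync ws i j : j != i -> ws i j = ws i i ->
  consume_sync (advance_sync ws i) i j =
  upd ws i (upd (upd (ws i) i (ws i i).+1) j (ws i i).+1).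
Proof.
move=> ji same; apply: functional_extensionality => a.
rewrite /consume_sync /advance_sync /upd /=; case: eqVneq => //= _.
by apply: functional_extensionality => c; rewrite eqxx (negbTE ji) same.
Qed.

Lemma handler_write_inv c i j b v p1 p2 : inv_at c ->
  pend (loc c i) = p1 ++ PWrite j b v :: p2 -> b = odd (wsync (loc c i) j).+1 ->
  inv_at (Config (upd (loc c) i (run i (set_pend (loc c i) (p1 ++ p2)) (PWrite j b v)).1)
                 (net c ++ (run i (set_pend (loc c i) (p1 ++ p2)) (PWrite j b v)).2)).
Proof.
move=> I pend_i parity; have [ji lt_R v_next] := consume_message I pend_i parity.
rewrite /run /=; case: ifP => [/eqP [same]|fresh].
  (* Advance before consuming, so that w_sync_i[j] never overtakes w_sync_i[i]. *)
  have next : (wsync (loc c i) i).+1 <= syncs c w w /\ v = hists c w (wsync (loc c i) i).+1.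
    by rewrite -same; split=> //; apply: leq_trans lt_R (sent_le_writer I j i).
  have A := inv_advance I (or_intror next).
  have parityA : b = odd (advance_sync (syncs c) i i j).+1.
    by rewrite advance_sync_other ?ji ?orbT.
  have laggingA : advance_sync (syncs c) i i j < advance_sync (syncs c) i i i.
    by rewrite advance_sync_own advance_sync_other ?ji ?orbT // /syncs same.
  have := inv_consume A pend_i parityA laggingA.
  rewrite /resend advance_sync_own advance_sync_other ?ji ?orbT // /syncs same ltnn cats0.
  by move=> C; apply: inv_at_upd; rewrite -(consume_advance_sync (ws := syncs c) ji same).
have lagging : wsync (loc c i) j < wsync (loc c i) i.
  by move: fresh; rewrite eqSS ltn_neqAle (sync_le_own I) andbT => /negbT.
have C := inv_consume I pend_i parity lagging; rewrite /resend in C.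
by case: ifP C => lt_own C; apply: inv_at_upd; rewrite /= upd_id.
Qed.

Lemma local_step_inv t c i s' out : inv_at c -> lstep w t i (loc c i) s' out ->
  inv_at (Config (upd (loc c) i s') (net c ++ out)).
Proof.
move=> I; move E: (loc c i) => s step; case: step E => {s s' out}.
- move=> s v iw _ <-; apply: inv_at_upd; rewrite upd_id.
  exact: inv_advance I (or_introl iw).
- by move=> ? ? _ _ <-; apply: inv_at_quiet => //; rewrite cats0.
- move=> ? _ <-; apply: inv_at_quiet => //; apply: filter_cat_nowrite.
  by rewrite has_map; apply/hasPn.
- by move=> ? ? _ _ <-; apply: inv_at_quiet => //; rewrite cats0.
- by move=> ? ? _ _ <-; apply: inv_at_quiet => //; rewrite cats0.
- move=> s0 p1 [j b v|j sn] p2 pend_i guard E; subst s0.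
    exact: handler_write_inv I pend_i (eqP guard).
  apply: inv_at_quiet => //; first exact: filter_cat_nowrite.
  by rewrite pend_i !filter_cat.
Qed.

Lemma deliver_inv c s1 s2 j i m : inv_at c -> net c = s1 ++ (j, i, m) :: s2 ->
  inv_at (Config (upd (loc c) i (receive i (loc c i) j m)) (s1 ++ s2)).
Proof.
move=> I net_c; case: m net_c => [b v||] net_c; last 2 first.
- by apply: inv_at_quiet; rewrite //= ?filter_rcons ?net_c ?filter_cat.
- by apply: inv_at_quiet; rewrite //= ?net_c ?filter_cat.
have in_net p : List.In p (s1 ++ s2) -> List.In p (net c).
  by rewrite net_c => /In_cat [?|?]; apply/In_cat; [left | right; right].
apply: inv_at_upd; rewrite !upd_id; apply: (inv_frame I).
- by move=> p /in_net /(packets_valid I).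
- move=> a h; rewrite /upd /=; case: eqVneq => [->|_]; last exact: (pendings_valid I).
  rewrite -cats1 => /In_cat [/(pendings_valid I) //|[<-|[]]].
  by apply: (packets_valid I (p := (j, i, MWrite b v))); rewrite net_c; apply/In_cat; right; left.
- move=> x y bb; rewrite /in_flight net_c !count_cat /upd /=.
  case: eqVneq => [->|ny]; first by rewrite /pends -cats1 count_cat /=; lia.
  by rewrite /= andbF.
Qed.

Lemma step_inv t c c' : inv_at c -> step w t c c' -> inv_at c'.
Proof.
move=> I step; case: step I => [{}c i s' out _ step I | {}c s1 s2 j i m net_c _ I | {}c i _ _ I].
- exact: local_step_inv I step.
- exact: deliver_inv I net_c.
- exact: inv_at_quiet.
Qed.

Lemma initial_inv v0 c : initial v0 c -> inv_at c.
Proof.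
case=> net0 loc0.
have sync0 a b : syncs c a b = 0 by case: (loc0 a) => _ [zero _]; apply: zero.
have pend0 a : pends c a = [::] by case: (loc0 a) => _ [_ [_ []]].
have hist0 a : hists c a 0 = v0 by case: (loc0 a).
split; rewrite ?net0 => //.
- by move=> a; rewrite !sync0.
- by move=> a k; rewrite sync0 leqn0 => /eqP ->; rewrite !hist0.
- by move=> a b; rewrite !sync0.
- by move=> a b; rewrite !sync0.
- by move=> a h; rewrite pend0.
- by move=> a b bb; rewrite /in_flight pend0 /sent !sync0.
Qed.

Lemma reachable_inv v0 t c : reachable v0 w t c -> inv_at c.
Proof.
elim=> [{}c /initial_inv //|c0 c1 _ I0 step]; exact: step_inv I0 step.
Qed.

End Invariant.

Theorem lemma4 (n : nat) (V : Type) (v0 : V) (w : 'I_n) (t : nat)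
  (ht : 2 * t < n) (c : config n V) (hc : reachable v0 w t c) (i : 'I_n) :
  is_prefix (hist_seq i (loc c i)) (hist_seq w (loc c w)).
Proof.
(* [ht] is only needed for liveness; the prefix property holds for any [t]. *)
have I := reachable_inv hc.
have le_own : wsync (loc c i) i <= wsync (loc c w) w := own_le_writer I i.
have agree k : k <= wsync (loc c i) i -> hist (loc c i) k = hist (loc c w) k.
  exact: (hist_agree I).
rewrite /hist_seq /mkseq.
set a := wsync (loc c i) i in le_own agree *; set W := wsync (loc c w) w in le_own *.
exists [seq hist (loc c w) k | k <- iota a.+1 (W - a)].
have -> : W.+1 = a.+1 + (W - a) by rewrite addSn subnKC.
rewrite iotaD map_cat; congr (_ ++ _).
by apply/eq_in_map => k; rewrite mem_iota ltnS => /andP [_ /agree].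
Qed.
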